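(* Let $A\in\mathbb R^{m\times d}$, $B\in\mathbb R^{\ell\times d}$ with $\ker B=\{0\}$, and let $v\in\mathbb S^{d-1}$ be such that $v$ is not a generalized eigenvector of $(A^TA,B^TB)$. Let $x\sim\mathcal U(\mathbb S^{d-1})$ and set $a=\|Av\|^2$, $b=\langle Av,Ax\rangle$, $c=\|Ax\|^2$, $d_v=\|Bv\|^2$, $e=\langle Bv,Bx\rangle$, $f_x=\|Bx\|^2$, $\alpha=bd_v-ae$, $\gamma=ce-bf_x$. Then almost surely $\gamma\neq0$ and $\alpha\neq0$.
   Context: A generalized eigenvector of $(A^TA,B^TB)$ is a vector $w\neq0$ with $A^TAw=\lambda B^TBw$ for some $\lambda\in\mathbb R$. $\mathcal U(\mathbb S^{d-1})$ is the uniform probability measure on the Euclidean unit sphere $\mathbb S^{d-1}\subset\mathbb R^d$. *)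

From mathcomp Require Import all_boot all_order all_algebra.
From mathcomp Require Import all_classical all_reals all_analysis.
Set Implicit Arguments. Unset Strict Implicit. Unset Printing Implicit Defensive.
Import Order.TTheory GRing.Theory Num.Theory.
Local Open Scope classical_set_scope.
Local Open Scope ring_scope.

Section Defs.
Variable R : realType.

Definition dotv d (u w : 'cV[R]_d) : R := \sum_(i < d) u i ord0 * w i ord0.
Definition sqnorm d (u : 'cV[R]_d) : R := dotv u u.

Definition usphere d : set 'cV[R]_d := [set x | sqnorm x = 1].

Definition box d (a b : 'I_d -> R) : set 'cV[R]_d :=
  [set x | forall i, a i <= x i ord0 <= b i].
Definition box_vol d (a b : 'I_d -> R) : R := \prod_(i < d) Num.max (b i - a i) 0.

Definition leb_outer d (S : set 'cV[R]_d) : \bar R :=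
  ereal_inf [set s | exists (a b : nat -> 'I_d -> R),
      S `<=` \bigcup_k box (a k) (b k) /\
      s = (\sum_(0 <= k <oo) (box_vol (a k) (b k))%:E)%E].

Definition cone d (S : set 'cV[R]_d) : set 'cV[R]_d :=
  [set y | exists t x, 0 < t <= 1 /\ S x /\ y = t *: x].

(* uniform probability measure on S^{d-1} (normalized cone measure, which
   coincides with normalized surface measure), as an outer measure *)
Definition unif_sphere d (S : set 'cV[R]_d) : \bar R :=
  (fine (leb_outer (cone (S `&` (@usphere d)))) / fine (leb_outer (cone ((@usphere d)))))%:E.

Definition unif_sphere_as d (P : 'cV[R]_d -> Prop) : Prop :=
  unif_sphere [set x | (@usphere d) x /\ ~ P x] = 0%E.

Definition gen_eigvec m l d (A : 'M[R]_(m, d)) (B : 'M[R]_(l, d)) (w : 'cV[R]_d) :=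
  w != 0 /\ exists lam : R, (A^T *m A) *m w = lam *: ((B^T *m B) *m w).

End Defs.

From mathcomp Require Import all_boot all_order all_algebra.
From mathcomp Require Import all_classical all_reals all_analysis.
From mathcomp Require Import ring lra zify.
Import Order.TTheory GRing.Theory Num.Theory.
Set Implicit Arguments. Unset Strict Implicit. Unset Printing Implicit Defensive.

(* Write P = gamma * alpha, where gamma(x) = |Ax|^2 <Bv,Bx> - <Av,Ax> |Bx|^2 is a
   cubic and alpha(x) = <Av,Ax> |Bv|^2 - |Av|^2 <Bv,Bx> a linear form.  P is a
   homogeneous quartic, so the cone over the exceptional directions lies in the
   zero set of P in the cube [-1,1]^d, and it is enough to show that this zero set
   is Lebesgue-null.

   P does not vanish identically: the component x0 of A^TAv orthogonal to B^TBv
   is nonzero because v is not a generalized eigenvector, and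
   gamma(x0) = -|x0|^2 |Bx0|^2, alpha(x0) = |x0|^2 |Bv|^2.  Hence on every line
   of direction x0, P is a polynomial of degree 4 with leading coefficient P(x0).

   The zero set of a locally Lipschitz function that is, on every line of a fixed
   direction u, a polynomial of degree k with a fixed nonzero coefficient c of t^k
   is null.  Cut the cube into columns of cells of size 1/N stacked along u.  On a
   column, |P| <= L/N at every cell meeting the zero set, and by Lagrange
   interpolation a polynomial that small at k+1 points at mutual distance
   q = (g-1)/N has |c| <= (k+1)(L/N)/q^k.  So a column meets at most k g cells, and with
   N ~ n^(k+1), g ~ n^k the cells meeting the zero set have total volume O(1/n). *)

Lemma sum_nat_pred_le (p : pred nat) a b : \sum_(a <= i < b) p i <= b - a.
Proof.
apply: (@leq_trans (\sum_(a <= i < b) 1)); first by apply: leq_sum => i _; case: (p i).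
by rewrite sum_nat_const_nat muln1.
Qed.

Lemma gapped_hits (p : pred nat) g n m a : 0 < g -> m * g < \sum_(a <= i < n) p i ->
  exists s : seq nat, [/\ size s = m.+1, all p s, all (fun i => a <= i < n) s
                        & sorted (fun i j => i + g <= j) s].
Proof.
move=> g0; move: {2}(n - a) (leqnn (n - a)) => k.
elim: k m a => [|k IH] m a ank hits; first by rewrite big_geq ?ltn0 in hits; lia.
have an : a < n by apply: contraTT hits; rewrite -leqNgt => na; rewrite big_geq.
rewrite big_ltn // in hits; case pa: (p a) in hits; last first.
  have [s [sz ps rs gs]] := IH m a.+1 ltac:(lia) hits.
  by exists s; split => //; apply: sub_all rs => i /andP[ai ->]; rewrite ltnW.
case: m hits => [|m] hits; first by exists [:: a]; rewrite /= pa leqnn an.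
have hits_rest : m * g < \sum_(a + g <= i < n) p i.
  have := sum_nat_pred_le p a.+1 (a + g); have := sum_nat_pred_le p a.+1 n.
  case: (leqP (a + g) n) => [agn|]; last by lia.
  by rewrite (@big_cat_nat _ _ _ (a + g) a.+1 n) //= in hits; lia.
have [s [sz ps rs gs]] := IH m (a + g) ltac:(lia) hits_rest.
exists (a :: s); split => /=; [by rewrite sz | by rewrite pa ps | |].
  rewrite leqnn an; apply: sub_all rs => i /andP[agi ->].
  by rewrite (leq_trans (leq_addr g a) agi).
by case: s {sz ps} rs gs => //= i s /andP[/andP[-> _] _] ->.
Qed.

Local Open Scope classical_set_scope.
Local Open Scope ring_scope.

Section Interpolation.
Variables (K : fieldType) (n : nat) (x : 'I_n.+1 -> K).
Hypothesis x_inj : injective x.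

Let nodal i := \prod_(j | j != i) ('X - (x j)%:P).

Let size_nodal i : size (nodal i) = n.+1.
Proof.
rewrite /nodal -big_filter size_prod_XsubC size_filter; congr _.+1.
transitivity #|predC1 i|; last by rewrite cardC1 card_ord.
by rewrite cardE /enum_mem size_filter.
Qed.

Let nodal_coef i : (nodal i)`_n = 1.
Proof.
have /monicP := monic_prod_XsubC (index_enum 'I_n.+1) (predC1 i) x.
by rewrite lead_coefE -/(nodal i) size_nodal.
Qed.

Let horner_nodal i k :
  (nodal i).[x k] = if k == i then \prod_(j | j != i) (x i - x j) else 0.
Proof.
rewrite horner_prod; case: eqP => [->|/eqP ki].
  by apply: eq_bigr => j _; rewrite hornerXsubC.
by rewrite (bigD1 k) //= hornerXsubC subrr mul0r.
Qed.

Let nodal_weight_neq0 i : \prod_(j | j != i) (x i - x j) != 0.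
Proof. by apply/prodf_neq0 => j ji; rewrite subr_eq0 (inj_eq x_inj) eq_sym. Qed.

Lemma coef_interpolation (p : {poly K}) : (size p <= n.+1)%N ->
  p`_n = \sum_i p.[x i] / \prod_(j | j != i) (x i - x j).
Proof.
move=> sp.
pose r := \sum_i (p.[x i] / \prod_(j | j != i) (x i - x j)) *: nodal i.
have r_at k : r.[x k] = p.[x k].
  rewrite /r horner_sum (bigD1 k) //= hornerZ horner_nodal eqxx divfK //.
  rewrite big1 ?addr0 // => i ik.
  by rewrite hornerZ horner_nodal eq_sym (negbTE ik) mulr0.
have size_r : (size r <= n.+1)%N.
  apply: (big_ind (fun q : {poly K} => size q <= n.+1)%N) => [|q1 q2 s1 s2|i _].
  - by rewrite size_poly0.
  - by apply: leq_trans (size_polyD _ _) _; rewrite geq_max s1.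
  - by apply: leq_trans (size_scale_leq _ _) _; rewrite size_nodal.
have p_eq_r : p = r.
  apply/eqP; rewrite -subr_eq0; apply/eqP.
  apply: (@roots_geq_poly_eq0 _ _ [seq x i | i <- enum 'I_n.+1]).
  - by apply/allP => _ /mapP[k _ ->]; rewrite rootE hornerD hornerN r_at subrr.
  - by rewrite map_inj_uniq ?enum_uniq.
  - rewrite size_map size_enum_ord; apply: leq_trans (size_polyD _ _) _.
    by rewrite size_polyN geq_max sp.
rewrite {1}p_eq_r coef_sum; apply: eq_bigr => i _.
by rewrite coefZ nodal_coef mulr1.
Qed.

End Interpolation.

Lemma coef_interpolation_le (R : realFieldType) n (p : {poly R})
    (x : 'I_n.+1 -> R) (e q : R) :
  0 < q -> (forall i j, i != j -> q <= `|x i - x j|) ->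
  (forall i, `|p.[x i]| <= e) -> (size p <= n.+1)%N ->
  `|p`_n| <= n.+1%:R * e / q ^+ n.
Proof.
move=> q0 sep pe sp.
have x_inj : injective x.
  move=> i j; apply: contra_eq => ij; rewrite -subr_eq0 -normr_gt0.
  exact: lt_le_trans q0 (sep _ _ ij).
have e0 : 0 <= e := le_trans (normr_ge0 _) (pe ord0).
have -> : n.+1%:R * e / q ^+ n = \sum_(i < n.+1) e / q ^+ n.
  by rewrite sumr_const card_ord -mulrA mulr_natl.
rewrite (coef_interpolation x_inj sp).
apply: le_trans (ler_norm_sum _ _ _) _; apply: ler_sum => i _.
rewrite normrM normfV normr_prod.
apply: ler_pM; [exact: normr_ge0 | by rewrite invr_ge0 prodr_ge0 | exact: pe |].
have qn : q ^+ n = \prod_(j | j != i) q by rewrite prodr_const cardC1 card_ord.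
have qn0 : 0 < q ^+ n by rewrite exprn_gt0.
have q_le : q ^+ n <= \prod_(j | j != i) `|x i - x j|.
  by rewrite qn; apply: ler_prod => j ji; rewrite (ltW q0) sep // eq_sym.
by rewrite lef_pV2 ?posrE // (lt_le_trans qn0 q_le).
Qed.

Section EuclideanDot.
Variables (R : realType) (n : nat).
Implicit Types w z : 'cV[R]_n.

Lemma dotvC w z : dotv w z = dotv z w.
Proof. by apply: eq_bigr => i _; rewrite mulrC. Qed.

Lemma dotvDr w z1 z2 : dotv w (z1 + z2) = dotv w z1 + dotv w z2.
Proof. by rewrite /dotv -big_split; apply: eq_bigr => i _; rewrite mxE mulrDr. Qed.

Lemma dotvZr w t z : dotv w (t *: z) = t * dotv w z.
Proof. by rewrite /dotv mulr_sumr; apply: eq_bigr => i _; rewrite mxE mulrCA. Qed.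

Lemma dotvDl w1 w2 z : dotv (w1 + w2) z = dotv w1 z + dotv w2 z.
Proof. by rewrite dotvC dotvDr !(dotvC z). Qed.

Lemma dotvZl t w z : dotv (t *: w) z = t * dotv w z.
Proof. by rewrite dotvC dotvZr dotvC. Qed.

Lemma dotvBr w z1 z2 : dotv w (z1 - z2) = dotv w z1 - dotv w z2.
Proof. by rewrite dotvDr -scaleN1r dotvZr mulN1r. Qed.

Lemma dotvE w z : dotv w z = (w^T *m z) ord0 ord0.
Proof. by rewrite mxE; apply: eq_bigr => i _; rewrite mxE. Qed.

Lemma dotv0r w : dotv w 0 = 0.
Proof. by rewrite -(scale0r 0) dotvZr mul0r. Qed.

Lemma sqnorm_ge0 w : 0 <= sqnorm w.
Proof. by apply: sumr_ge0 => i _; rewrite -expr2 sqr_ge0. Qed.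

Lemma sqnorm_eq0 w : (sqnorm w == 0) = (w == 0).
Proof.
apply/eqP/eqP => [w0|->]; last by rewrite /sqnorm dotv0r.
apply/matrixP => i k; rewrite (ord1 k) mxE.
have sq_ge0 (l : 'I_n) : true -> 0 <= w l ord0 * w l ord0.
  by rewrite -expr2 sqr_ge0.
by move/eqP: (psumr_eq0P sq_ge0 w0 (i:=i) isT); rewrite mulf_eq0 orbb => /eqP.
Qed.

Lemma sqnorm_gt0 w : (0 < sqnorm w) = (w != 0).
Proof. by rewrite lt_def sqnorm_eq0 sqnorm_ge0 andbT. Qed.

Lemma sqnormDZ w t z :
  sqnorm (w + t *: z) = sqnorm w + 2 * t * dotv w z + t ^+ 2 * sqnorm z.
Proof. by rewrite /sqnorm !dotvDl !dotvDr !dotvZl !dotvZr (dotvC z w); ring. Qed.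

Lemma sqnormZ t w : sqnorm (t *: w) = t ^+ 2 * sqnorm w.
Proof. by rewrite /sqnorm dotvZl dotvZr mulrA expr2. Qed.

Lemma usphere_neq0 w : usphere w -> w != 0.
Proof. by rewrite /usphere /= -sqnorm_eq0 => ->; rewrite oner_eq0. Qed.

Lemma usphere_coord_le1 w i : usphere w -> `|w i ord0| <= 1.
Proof.
move=> w1; rewrite -(ler_pXn2r (isT : (0 < 2)%N)) ?nnegrE // expr1n real_normK ?num_real //.
rewrite -w1 /sqnorm /dotv (bigD1 i) //= expr2 lerDl.
by apply: sumr_ge0 => k _; rewrite -expr2 sqr_ge0.
Qed.

End EuclideanDot.

Lemma dotv_mulmx (R : realType) m n (A : 'M[R]_(m, n)) (w z : 'cV[R]_n) :
  dotv (A *m w) (A *m z) = dotv ((A^T *m A) *m w) z.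
Proof. by rewrite !dotvE !trmx_mul trmxK !mulmxA. Qed.

Section CubeLipschitz.
Variables (R : realFieldType) (d : nat).
Implicit Types f g : 'cV[R]_d -> R.

Definition cube (r : R) : set 'cV[R]_d := [set x | forall i, `|x i ord0| <= r].

Definition cube_lipschitz f := forall r : R, exists M L : R,
  [/\ 0 <= M, 0 <= L & forall x y h, 0 <= h -> cube r x -> cube r y ->
      cube h (x - y) -> `|f x| <= M /\ `|f x - f y| <= L * h].

Lemma cube_lipschitz_cst k : cube_lipschitz (fun=> k).
Proof. by move=> r; exists `|k|, 0; split=> // x y h *; rewrite subrr normr0 mul0r. Qed.

Lemma cube_lipschitz_coord i : cube_lipschitz (fun x => x i ord0).
Proof.
move=> r; exists (Num.max r 0), 1; split=> [|//|x y h _ rx _ hxy].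
  by rewrite le_max lexx orbT.
by split; [rewrite le_max rx | move: (hxy i); rewrite !mxE mul1r].
Qed.

Lemma cube_lipschitzD f g :
  cube_lipschitz f -> cube_lipschitz g -> cube_lipschitz (fun x => f x + g x).
Proof.
move=> Hf Hg r; have [M1 [L1 [M10 L10 H1]]] := Hf r; have [M2 [L2 [M20 L20 H2]]] := Hg r.
exists (M1 + M2), (L1 + L2); split; rewrite ?addr_ge0 // => x y h h0 rx ry hxy.
have [f1 f2] := H1 x y h h0 rx ry hxy; have [g1 g2] := H2 x y h h0 rx ry hxy.
split; first by rewrite (le_trans (ler_normD _ _)) ?lerD.
by rewrite opprD addrACA mulrDl (le_trans (ler_normD _ _)) ?lerD.
Qed.

Lemma cube_lipschitzN f : cube_lipschitz f -> cube_lipschitz (fun x => - f x).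
Proof.
move=> Hf r; have [M [L [M0 L0 H]]] := Hf r; exists M, L; split=> // x y h *.
by rewrite normrN -opprD normrN; apply: H.
Qed.

Lemma cube_lipschitzB f g :
  cube_lipschitz f -> cube_lipschitz g -> cube_lipschitz (fun x => f x - g x).
Proof. by move=> Hf /cube_lipschitzN; apply: cube_lipschitzD. Qed.

Lemma cube_lipschitzM f g :
  cube_lipschitz f -> cube_lipschitz g -> cube_lipschitz (fun x => f x * g x).
Proof.
move=> Hf Hg r; have [M1 [L1 [M10 L10 H1]]] := Hf r; have [M2 [L2 [M20 L20 H2]]] := Hg r.
exists (M1 * M2), (M1 * L2 + M2 * L1).
split; rewrite ?addr_ge0 ?mulr_ge0 // => x y h h0 rx ry hxy.
have [f1 f2] := H1 x y h h0 rx ry hxy; have [g1 g2] := H2 x y h h0 rx ry hxy.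
have yy : cube h (y - y) by move=> i; rewrite subrr mxE normr0.
have [gy _] := H2 y y h h0 ry ry yy.
split; first by rewrite normrM ler_pM.
have -> : f x * g x - f y * g y = f x * (g x - g y) + g y * (f x - f y) by ring.
by rewrite mulrDl -!mulrA (le_trans (ler_normD _ _)) // lerD // normrM ler_pM.
Qed.

Lemma cube_lipschitz_sum (I : Type) (s : seq I) (P : pred I) (F : I -> 'cV[R]_d -> R) :
  (forall i, P i -> cube_lipschitz (F i)) ->
  cube_lipschitz (fun x => \sum_(i <- s | P i) F i x).
Proof.
move=> HF; elim: s => [|i s IH].
  by under eq_fun do rewrite big_nil; exact: cube_lipschitz_cst.
under eq_fun do rewrite big_cons; case: (boolP (P i)) => Pi //.
exact: cube_lipschitzD (HF i Pi) IH.
Qed.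

Lemma cube_lipschitz_mulmx m (A : 'M[R]_(m, d)) i :
  cube_lipschitz (fun x => (A *m x) i ord0).
Proof.
under eq_fun do rewrite mxE.
by apply: cube_lipschitz_sum => j _; apply: cube_lipschitzM;
  [exact: cube_lipschitz_cst | exact: cube_lipschitz_coord].
Qed.

End CubeLipschitz.

Lemma cube_lipschitz_dotv (R : realType) d k (F G : 'cV[R]_d -> 'cV[R]_k) :
  (forall i, cube_lipschitz (fun x => F x i ord0)) ->
  (forall i, cube_lipschitz (fun x => G x i ord0)) ->
  cube_lipschitz (fun x => dotv (F x) (G x)).
Proof. by move=> HF HG; apply: cube_lipschitz_sum => i _; apply: cube_lipschitzM. Qed.

Section OuterMeasure.
Variables (R : realType) (d : nat).
Implicit Types S T : set 'cV[R]_d.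

Lemma box_vol_ge0 (a b : 'I_d -> R) : 0 <= box_vol a b.
Proof. by apply: prodr_ge0 => i _; rewrite le_max lexx orbT. Qed.

Lemma leb_outer_ge0 S : (0 <= leb_outer S)%E.
Proof.
apply/ereal_infP => _ [a [b [_ ->]]].
by apply: nneseries_ge0 => k _ _; rewrite lee_fin box_vol_ge0.
Qed.

Lemma leb_outer_le S T : S `<=` T -> (leb_outer S <= leb_outer T)%E.
Proof.
move=> ST; apply/ereal_infP => _ [a [b [cover ->]]]; apply: ereal_inf_lbound.
by exists a, b; split => //; apply: subset_trans cover.
Qed.

Lemma leb_outer_eq0 S (C : R) :
  (forall n : nat, (0 < n)%N -> (leb_outer S <= (C / n%:R)%:E)%E) -> leb_outer S = 0.
Proof.
move=> small; apply/eqP; rewrite eq_le leb_outer_ge0 andbT.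
have := small 1%N isT; case: (leb_outer S) small => [r| |] //= small; rewrite lee_fin => r1.
rewrite lee_fin leNgt; apply/negP => r0.
have C0 : 0 <= C by rewrite divr1 in r1; exact: le_trans (ltW r0) r1.
pose n := (Num.truncn (C / r)).+1.
have := small n isT; rewrite lee_fin ler_pdivlMr ?ltr0n // => Cn.
have := truncnS_gt (C / r); rewrite -/n ltr_pdivrMr // mulrC => nC.
by have := le_lt_trans Cn nC; rewrite ltxx.
Qed.

End OuterMeasure.

Lemma leb_outer_le_fin_cover (R : realType) d (I : finType) (P : pred I)
    (a b : I -> 'I_d.+1 -> R) (S : set 'cV[R]_d.+1) :
  S `<=` \bigcup_(i in [set i | P i]) box (a i) (b i) ->
  (leb_outer S <= (\sum_(i | P i) box_vol (a i) (b i))%:E)%E.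
Proof.
move=> cover; set e := [seq i <- enum I | P i].
(* Past the end of e the cover is padded with the empty box [1, 0]^d. *)
pose A k := if onth e k is Some i then a i else fun=> 1.
pose B k := if onth e k is Some i then b i else fun=> 0.
pose vol (o : option I) := if o is Some i then box_vol (a i) (b i) else 0.
have volAB k : box_vol (A k) (B k) = vol (onth e k).
  rewrite /A /B /vol; case: (onth e k) => //.
  rewrite /box_vol big_ord_recl sub0r (_ : Num.max (-1) 0 = 0) ?mul0r //.
  by apply/max_idPr; rewrite lerN10.
apply: ereal_inf_lbound; exists A, B; split.
  move=> x /cover[i /= Pi bx]; exists (index i e) => //.
  have ie : i \in e by rewrite mem_filter Pi mem_enum.
  by rewrite /A /B onthE (nth_map i) ?index_mem // nth_index.
rewrite (nneseries_split 0 (size e)); last first.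
  by move=> k _; rewrite lee_fin volAB; case: onth => //= i; exact: box_vol_ge0.
rewrite add0n eseries0 ?adde0 => [|k ek _]; last by rewrite volAB onth_default.
rewrite sumEFin; congr _%:E.
symmetry; under eq_bigr => k _ do rewrite volAB onthE.
transitivity (\sum_(o <- map Some e) vol o); first by rewrite (big_nth None) size_map.
by rewrite big_map /e big_filter big_enum_cond.
Qed.

Lemma coefM_size (R : comNzRingType) (p q : {poly R}) k l :
  (size p <= k.+1)%N -> (size q <= l.+1)%N -> (p * q)`_(k + l) = p`_k * q`_l.
Proof.
move=> sp sq; rewrite coefM (bigD1 (@Ordinal (k + l).+1 k (leq_addr l k))) //= addKn big1 ?addr0 //.
move=> i /eqP/val_eqP/= ik; case: (ltngtP i k) ik => // [ik|ki] _.
  by rewrite [q`_ _]nth_default ?mulr0 //; apply: leq_trans sq _; lia.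
by rewrite nth_default ?mul0r //; apply: leq_trans sp _.
Qed.

Section PolyAlong.
Variables (R : comNzRingType) (d : nat).
Implicit Types (P Q : 'cV[R]_d -> R) (u : 'cV[R]_d).

Definition poly_along P u k c := forall y, exists p : {poly R},
  [/\ (size p <= k.+1)%N, p`_k = c & forall t, P (y + t *: u) = p.[t]].

Lemma poly_along_cst u a : poly_along (fun=> a) u 0 a.
Proof.
by move=> y; exists a%:P; rewrite size_polyC leq_b1 coefC; split=> // t; rewrite hornerC.
Qed.

Lemma poly_alongM P Q u k l c e : poly_along P u k c -> poly_along Q u l e ->
  poly_along (fun x => P x * Q x) u (k + l) (c * e).
Proof.
move=> HP HQ y; have [p [sp <- Pp]] := HP y; have [q [sq <- Qq]] := HQ y.
exists (p * q); split; first by apply: leq_trans (size_polyMleq _ _) _; lia.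
  exact: coefM_size.
by move=> t; rewrite hornerM Pp Qq.
Qed.

Lemma poly_alongB P Q u k c e : poly_along P u k c -> poly_along Q u k e ->
  poly_along (fun x => P x - Q x) u k (c - e).
Proof.
move=> HP HQ y; have [p [sp <- Pp]] := HP y; have [q [sq <- Qq]] := HQ y.
exists (p - q); split; first by rewrite (leq_trans (size_polyD _ _)) // size_polyN geq_max sp.
  by rewrite coefB.
by move=> t; rewrite hornerD hornerN Pp Qq.
Qed.

Lemma poly_alongZ P u k c a : poly_along P u k c -> poly_along P (a *: u) k (c * a ^+ k).
Proof.
move=> HP y; have [p [sp <- Pp]] := HP y.
exists (\poly_(i < k.+1) (p`_i * a ^+ i)); split; first exact: size_poly.
  by rewrite coef_poly ltnSn.
move=> t; rewrite scalerA Pp horner_poly (horner_coef_wide _ sp).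
by apply: eq_bigr => i _; rewrite exprMn mulrA mulrAC.
Qed.

End PolyAlong.

Lemma poly_along_dotv (R : realType) m d (w : 'cV[R]_m) (A : 'M[R]_(m, d)) u :
  poly_along (fun x => dotv w (A *m x)) u 1 (dotv w (A *m u)).
Proof.
move=> y; exists (Poly [:: dotv w (A *m y); dotv w (A *m u)]).
split; [exact: size_Poly | by rewrite coef_Poly | move=> t].
by rewrite horner_Poly /= mulmxDr -scalemxAr dotvDr dotvZr; ring.
Qed.

Lemma poly_along_sqnorm (R : realType) m d (A : 'M[R]_(m, d)) u :
  poly_along (fun x => sqnorm (A *m x)) u 2 (sqnorm (A *m u)).
Proof.
move=> y; exists (Poly [:: sqnorm (A *m y); 2 * dotv (A *m y) (A *m u); sqnorm (A *m u)]).
split; [exact: size_Poly | by rewrite coef_Poly | move=> t].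
by rewrite horner_Poly /= mulmxDr -scalemxAr sqnormDZ; ring.
Qed.

Definition cube_zeros (R : realType) d (P : 'cV[R]_d -> R) : set 'cV[R]_d :=
  cube 1 `&` [set x | P x = 0].

Section GridCover.
Variables (R : realType) (d : nat) (j : 'I_d.+1) (u : 'cV[R]_d.+1).
Hypothesis uj : u j ord0 = 1.

Definition shear_bound : R := 1 + \sum_i `|u i ord0|.

Lemma normr_u_le i : `|u i ord0| <= shear_bound - 1.
Proof.
by rewrite /shear_bound addrC addKr (bigD1 i) //= lerDl sumr_ge0.
Qed.

Lemma shear_bound_ge1 : 1 <= shear_bound.
Proof. by rewrite lerDl sumr_ge0. Qed.

(* Cells are cubes of side 1/N in the coordinates [shear x], in which u is the
   j-th basis vector: the cells of a column, which share all coordinates but the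
   j-th, are stacked along u.  Each cell lies in an axis-parallel box of side
   [cell_width]. *)
Definition shear (x : 'cV[R]_d.+1) i :=
  if i == j then x j ord0 else x i ord0 - x j ord0 * u i ord0.

Lemma normr_shear_le x i : cube 1 x -> `|shear x i| <= shear_bound.
Proof.
move=> x1; rewrite /shear; case: ifP => _; first exact: le_trans (x1 j) shear_bound_ge1.
have := normr_u_le i; have := x1 i.
have : `|x j ord0 * u i ord0| <= shear_bound - 1.
  by rewrite normrM -[_ - 1]mul1r ler_pM // normr_u_le.
move=> xu xi ui; apply: le_trans (ler_normB _ _) _; lra.
Qed.

Variables (V N : nat).
Hypotheses (V_ge : 1 + shear_bound <= V%:R) (N_gt0 : (0 < N)%N).

Let K := (2 * V * N).+1.
Let cell_id := ({ffun 'I_d -> 'I_K} * 'I_K)%type.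

Definition grid_coord x i := Num.truncn ((shear x i + V%:R) * N%:R).

Let N_gt0R : (0 : R) < N%:R. Proof. by rewrite ltr0n. Qed.

Let shifted_shear_ge0 x i : cube 1 x -> 0 <= (shear x i + V%:R) * N%:R.
Proof.
move=> x1; have := normr_shear_le i x1; rewrite ler_norml => /andP[lo _].
(* lra ignores section hypotheses, hence the local copy of V_ge. *)
have V1 := V_ge; rewrite mulr_ge0 //; lra.
Qed.

Lemma grid_coord_lt x i : cube 1 x -> (grid_coord x i < K)%N.
Proof.
move=> x1; rewrite ltnS -(ler_nat R).
have /andP[le_trunc _] := truncn_itv (shifted_shear_ge0 i x1).
apply: le_trans le_trunc _; rewrite natrM natrM ler_pM2r //.
by have := V_ge; have := normr_shear_le i x1; rewrite ler_norml => /andP[_ ?]; lra.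
Qed.

Definition cell x : cell_id :=
  ([ffun i => inord (grid_coord x (lift j i))], inord (grid_coord x j)).

Definition cell_coord (q : cell_id) i : nat :=
  if unlift j i is Some i' then q.1 i' else q.2.

Lemma cell_coord_cell x i : cube 1 x -> cell_coord (cell x) i = grid_coord x i.
Proof.
move=> x1; rewrite /cell_coord; case: unliftP => [i' ->|->] /=.
  by rewrite ffunE inordK // grid_coord_lt.
by rewrite inordK // grid_coord_lt.
Qed.

Definition corner (q : cell_id) i : R := (cell_coord q i)%:R / N%:R - V%:R.

Lemma corner_le_shear x i : cube 1 x ->
  corner (cell x) i <= shear x i <= corner (cell x) i + N%:R^-1.
Proof.
move=> x1; rewrite /corner cell_coord_cell // /grid_coord.
have /andP[lo hi] := truncn_itv (shifted_shear_ge0 i x1).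
rewrite -ler_pdivrMr // in lo; rewrite -ltr_pdivlMr // -natr1 mulrDl mul1r in hi.
by apply/andP; split; lra.
Qed.

Let lift_neqj i : (lift j i == j) = false.
Proof. by rewrite eq_sym (negbTE (neq_lift j i)). Qed.

Definition cell_width : R := (1 + 2 * shear_bound) / N%:R.

Definition cell_lo (q : cell_id) i : R :=
  (if i == j then 0 else corner q i) + u i ord0 * corner q j - shear_bound / N%:R.

Definition cell_hi (q : cell_id) i : R := cell_lo q i + cell_width.

Lemma cell_box x : cube 1 x -> box (cell_lo (cell x)) (cell_hi (cell x)) x.
Proof.
move=> x1 i; rewrite /cell_hi /cell_lo /cell_width.
have /andP[cj1 cj2] := corner_le_shear j x1; rewrite /shear eqxx in cj1 cj2.
set cj := corner (cell x) j in cj1 cj2 *.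
have U1 := shear_bound_ge1; have UN : 0 <= shear_bound / N%:R by rewrite divr_ge0 //; lra.
have ui := normr_u_le i.
have : `|u i ord0 * (x j ord0 - cj)| <= shear_bound / N%:R.
  rewrite normrM [`|x j ord0 - cj|]ger0_norm ?subr_ge0 //; apply: ler_pM => //; lra.
rewrite ler_norml mulrBr => /andP[m1 m2].
have -> : (1 + 2 * shear_bound) / N%:R = N%:R^-1 + 2 * (shear_bound / N%:R).
  by rewrite mulrDl mul1r mulrA.
case: ifP => [/eqP ->|ij]; first by rewrite uj mul1r; apply/andP; split; lra.
have /andP[ci1 ci2] := corner_le_shear i x1; rewrite /shear ij in ci1 ci2.
by apply/andP; split; lra.
Qed.

Variables (P : 'cV[R]_d.+1 -> R) (k : nat) (c L : R).
Hypothesis P_poly : poly_along P u k c.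
Hypothesis P_lip : forall x z, cube 1 x -> cube (2 + 2 * shear_bound) z ->
  cube N%:R^-1 (x - z) -> P x = 0 -> `|P z| <= L / N%:R.

Definition hit (q : cell_id) : bool := `[< exists2 x, cube_zeros P x & cell x = q >].

Definition column_base (c0 : {ffun 'I_d -> 'I_K}) : 'cV[R]_d.+1 :=
  \col_i (if unlift j i is Some i' then (c0 i' : nat)%:R / N%:R - V%:R else 0).

Definition in_slab (s : nat) (t : R) :=
  s%:R / N%:R - V%:R <= t <= s%:R / N%:R - V%:R + N%:R^-1.

Lemma in_slab_sep g s1 s2 t1 t2 : (s1 + g <= s2)%N ->
  in_slab s1 t1 -> in_slab s2 t2 -> (g%:R - 1) / N%:R <= t2 - t1.
Proof.
move=> gap /andP[_ t1_le] /andP[le_t2 _].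
have : (s1 + g)%:R / N%:R <= s2%:R / N%:R :> R by rewrite ler_pM2r ?invr_gt0 // ler_nat.
by rewrite natrD mulrDl mulrBl mul1r; lra.
Qed.

Lemma hit_in_slab c0 (s : 'I_K) x : cube_zeros P x -> cell x = (c0, s) ->
  in_slab s (x j ord0) /\ `|P (column_base c0 + x j ord0 *: u)| <= L / N%:R.
Proof.
move=> [x1 Px] xc; split.
  by have := corner_le_shear j x1; rewrite /corner /cell_coord unlift_none xc /shear eqxx.
have N1 : N%:R^-1 <= 1 :> R by rewrite invr_le1 ?ler1n // unitfE gt_eqF.
have U1 := shear_bound_ge1; have xj1 := x1 j.
apply: (P_lip x1 _ _ Px) => i; rewrite !mxE; case: unliftP => [i' ->|->].
2,4: by rewrite ?add0r ?uj ?mulr1 ?subrr ?normr0 ?invr_ge0 ?ler0n //; lra.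
all: have := corner_le_shear (lift j i') x1.
all: rewrite /corner /cell_coord liftK xc /shear lift_neqj => /andP[lo hi].
  have := normr_shear_le (lift j i') x1.
  rewrite /shear lift_neqj ler_norml => /andP[sh1 sh2].
  have : `|x j ord0 * u (lift j i') ord0| <= shear_bound - 1.
    by rewrite normrM -[_ - 1]mul1r ler_pM // normr_u_le.
  by rewrite !ler_norml => /andP[xu1 xu2]; apply/andP; split; lra.
by rewrite ler_norml; apply/andP; split; lra.
Qed.

Lemma column_hits_le c0 g : (1 < g)%N ->
  k.+1%:R * (L / N%:R) / ((g%:R - 1) / N%:R) ^+ k < `|c| ->
  (\sum_(s < K) hit (c0, s) <= k * g)%N.
Proof.
move=> g1 c_big; rewrite leqNgt; apply/negP => many.
have {}many : (k * g < \sum_(0 <= s < K) hit (c0, inord s))%N.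
  by rewrite big_mkord; under eq_bigr => s _ do rewrite inord_val.
have [ss [size_ss ss_hit ss_range ss_gap]] := gapped_hits (ltnW g1) many.
have witness s : exists r, (s < K)%N -> hit (c0, inord s) ->
    in_slab s r /\ `|P (column_base c0 + r *: u)| <= L / N%:R.
  case: (boolP (hit (c0, inord s))) => [/asboolP[x zx xc]|_].
    by exists (x j ord0) => sK _; have := hit_in_slab zx xc; rewrite inordK.
  by exists 0.
have [t t_slab] := choice witness.
pose x (i : 'I_k.+1) := t (nth 0%N ss i).
have nth_ss (i : 'I_k.+1) : (nth 0%N ss i < K)%N /\ hit (c0, inord (nth 0%N ss i)).
  have i_ss : nth 0%N ss i \in ss by rewrite mem_nth // size_ss.
  by move/allP/(_ _ i_ss): ss_hit; move/allP/(_ _ i_ss): ss_range => /andP[_ ->].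
have [p [size_p pk Pp]] := P_poly (column_base c0).
have q_gt0 : 0 < (g%:R - 1) / N%:R :> R by rewrite divr_gt0 // subr_gt0 ltr1n.
have sep i i' : i != i' -> (g%:R - 1) / N%:R <= `|x i - x i'|.
  wlog lt_ii' : i i' / (i < i')%N.
    move=> sep ne; case: (ltngtP i i') => [lt|lt|/val_inj eq]; first exact: sep.
      by rewrite distrC; apply: sep; rewrite // eq_sym.
    by rewrite eq eqxx in ne.
  move=> _; have [iK ih] := nth_ss i; have [i'K i'h] := nth_ss i'.
  have gap : (nth 0%N ss i + g <= nth 0%N ss i')%N.
    apply: (sorted_ltn_nth _ 0%N ss_gap) => //; rewrite ?inE ?size_ss //.
    by move=> b a e; lia.
  apply: le_trans (in_slab_sep gap (t_slab _ iK ih).1 (t_slab _ i'K i'h).1) _.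
  by rewrite distrC ler_norm.
have p_small i : `|p.[x i]| <= L / N%:R.
  by have [iK ih] := nth_ss i; rewrite -Pp; exact: (t_slab _ iK ih).2.
have := coef_interpolation_le q_gt0 sep p_small size_p.
by rewrite pk => /(lt_le_trans c_big); rewrite ltxx.
Qed.

Lemma leb_outer_cube_zeros_le g : (1 < g)%N ->
  k.+1%:R * (L / N%:R) / ((g%:R - 1) / N%:R) ^+ k < `|c| ->
  (leb_outer (cube_zeros P) <= ((K ^ d * (k * g))%:R * cell_width ^+ d.+1)%:E)%E.
Proof.
move=> g1 c_big.
have W0 : 0 <= cell_width by rewrite divr_ge0 //; have := shear_bound_ge1; lra.
apply: le_trans (@leb_outer_le_fin_cover _ _ _ hit cell_lo cell_hi _ _) _.
  by move=> x zx; exists (cell x); [apply/asboolP; exists x | exact: cell_box zx.1].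
have vol q : box_vol (cell_lo q) (cell_hi q) = cell_width ^+ d.+1.
  rewrite /box_vol (eq_bigr (fun=> cell_width)) ?prodr_const ?card_ord // => i _.
  by rewrite /cell_hi addrAC subrr add0r; apply/max_idPl.
rewrite lee_fin big_mkcond /=.
have ifE (b : bool) (w : R) : (if b then w else 0) = b%:R * w.
  by case: b; rewrite ?mul1r ?mul0r.
under eq_bigr => q _ do rewrite vol ifE.
rewrite -mulr_suml -natr_sum ler_wpM2r ?exprn_ge0 // ler_nat.
rewrite (eq_bigr (fun q : cell_id => nat_of_bool (hit (q.1, q.2)))); last by case.
rewrite -(pair_bigA _ (fun c0 s => nat_of_bool (hit (c0, s)))) /=.
apply: (@leq_trans (\sum_(c0 : {ffun 'I_d -> 'I_K}) k * g)%N).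
  by apply: leq_sum => c0 _; apply: column_hits_le.
by rewrite sum_nat_const card_ffun !card_ord.
Qed.

End GridCover.

Lemma grid_volume_le (R : realFieldType) (d V N m : nat) (W : R) :
  (0 < V)%N -> (0 < N)%N -> 0 <= W <= 2 * V%:R / N%:R ->
  ((2 * V * N).+1 ^ d * m)%N%:R * W ^+ d.+1
    <= (3 * V%:R) ^+ d * (2 * V%:R) ^+ d.+1 * (m%:R / N%:R).
Proof.
move=> V0 N0 /andP[W0 W_le].
have NR : (0 : R) < N%:R by rewrite ltr0n.
have VN : 1 <= V%:R * N%:R :> R by rewrite -natrM ler1n muln_gt0 V0.
have K_le : ((2 * V * N).+1 ^ d)%N%:R <= (3 * V%:R * N%:R) ^+ d :> R.
  by rewrite natrX lerXn2r ?nnegrE // -natr1 !natrM; lra.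
have W_pow : W ^+ d.+1 <= (2 * V%:R / N%:R) ^+ d.+1 by rewrite lerXn2r ?nnegrE.
rewrite natrM -mulrA; apply: le_trans (ler_pM _ _ K_le (ler_wpM2l _ W_pow)) _.
- by rewrite ler0n.
- by rewrite mulr_ge0 ?exprn_ge0.
- by rewrite ler0n.
rewrite le_eqVlt; apply/orP; left; apply/eqP.
rewrite !exprMn exprVn [N%:R ^+ d.+1]exprS.
by field; rewrite expf_neq0 ?gt_eqF.
Qed.

Lemma grid_parameters (R : archiRealFieldType) (k n : nat) (L c : R) :
  (0 < n)%N -> 0 <= L -> 0 < c -> exists N g : nat,
  [/\ (0 < N)%N, (1 < g)%N, k.+1%:R * (L / N%:R) / ((g%:R - 1) / N%:R) ^+ k < c
    & (k * g)%:R / N%:R <= 2 * k%:R / n%:R :> R].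
Proof.
move=> n0 L0 c0; pose Q := (Num.truncn (k.+1%:R * L / c)).+1.
have Q_gt : k.+1%:R * L / c < Q%:R := truncnS_gt _.
have nR : (0 : R) < n%:R by rewrite ltr0n.
have QR : (0 : R) < Q%:R by rewrite ltr0n.
have Qn0 : (0 < Q * n ^ k)%N by rewrite muln_gt0 expn_gt0 n0.
exists (Q * n ^ k.+1)%N, (Q * n ^ k).+1; split.
- by rewrite muln_gt0 expn_gt0 n0.
- by rewrite ltnS.
- have qE : ((Q * n ^ k).+1%:R - 1) / (Q * n ^ k.+1)%N%:R = n%:R^-1 :> R.
    rewrite -[(Q * n ^ k).+1%:R]natr1 addrK !natrM !natrX exprS; field.
    by rewrite !gt_eqF ?exprn_gt0.
  rewrite qE exprVn invrK natrM natrX exprS.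
  have -> : k.+1%:R * (L / (Q%:R * (n%:R * n%:R ^+ k))) * n%:R ^+ k
      = k.+1%:R * L / Q%:R / n%:R.
    by field; rewrite !gt_eqF ?exprn_gt0.
  apply: le_lt_trans (_ : _ <= k.+1%:R * L / Q%:R) _.
    by rewrite ler_pdivrMr // ler_peMr ?ler1n // divr_ge0 ?mulr_ge0.
  by move: Q_gt; rewrite !ltr_pdivrMr // [_ * Q%:R]mulrC.
- rewrite ler_pdivrMr ?ltr0n ?muln_gt0 ?expn_gt0 ?n0 // mulrAC ler_pdivlMr //.
  by rewrite -!natrM ler_nat expnS; nia.
Qed.

Lemma leb_outer_cube_zeros_eq0_coord (R : realType) d (j : 'I_d.+1) (u : 'cV[R]_d.+1)
    (P : 'cV[R]_d.+1 -> R) k c :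
  u j ord0 = 1 -> cube_lipschitz P -> c != 0 -> poly_along P u k c ->
  leb_outer (cube_zeros P) = 0.
Proof.
move=> uj Plip c0 Ppoly; have U1 := shear_bound_ge1 u.
pose V := (Num.truncn (1 + shear_bound u)).+1.
have V_ge : 1 + shear_bound u <= V%:R by rewrite ltW // truncnS_gt.
have [M [L [_ L0 Llip]]] := Plip (2 + 2 * shear_bound u).
have c_gt0 : 0 < `|c| by rewrite normr_gt0.
apply: (@leb_outer_eq0 _ _ _ ((3 * V%:R) ^+ d * (2 * V%:R) ^+ d.+1 * (2 * k%:R))) => n n0.
have [N [g [N0 g1 c_big ratio]]] := grid_parameters k n0 L0 c_gt0.
have NR : (0 : R) < N%:R by rewrite ltr0n.
have P_lip x z : cube 1 x -> cube (2 + 2 * shear_bound u) z -> cube N%:R^-1 (x - z) ->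
    P x = 0 -> `|P z| <= L / N%:R.
  move=> x1 z2 xz Px.
  have x2 : cube (2 + 2 * shear_bound u) x by move=> i; apply: le_trans (x1 i) _; lra.
  have N_inv_ge0 : 0 <= N%:R^-1 :> R by rewrite invr_ge0 ltW.
  by have [_] := Llip x z _ N_inv_ge0 x2 z2 xz; rewrite Px sub0r normrN.
apply: le_trans (leb_outer_cube_zeros_le uj V_ge N0 Ppoly P_lip g1 c_big) _.
rewrite lee_fin; apply: le_trans (grid_volume_le d (k * g) _ N0 _) _.
- by rewrite -(ltr0n R); apply: lt_le_trans V_ge; lra.
- rewrite /cell_width divr_ge0 ?ler0n //=; last lra.
  by rewrite ler_pM2r ?invr_gt0 //; lra.
rewrite -[X in _ <= X]mulrA; apply: ler_wpM2l ratio.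
by rewrite mulr_ge0 ?exprn_ge0 ?mulr_ge0 ?ler0n.
Qed.

Lemma leb_outer_cube_zeros_eq0 (R : realType) d (P : 'cV[R]_d -> R) (u : 'cV[R]_d) k c :
  cube_lipschitz P -> u != 0 -> c != 0 -> poly_along P u k c ->
  leb_outer (cube_zeros P) = 0.
Proof.
case: d P u => [|d] P u Plip u0 c0 Ppoly; first by rewrite flatmx0 eqxx in u0.
have [j uj0] : exists j, u j ord0 != 0.
  apply/existsP; apply: contraNT u0 => /existsPn u0; apply/eqP/matrixP => i l.
  by rewrite (ord1 l) mxE; apply/eqP/negPn/u0.
apply: (@leb_outer_cube_zeros_eq0_coord _ _ j ((u j ord0)^-1 *: u)) Plip _
  (poly_alongZ _ Ppoly); first by rewrite mxE mulVf.
by rewrite mulf_neq0 ?expf_neq0 ?invr_eq0.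
Qed.

Lemma unif_sphere_eq0 (R : realType) d (S T : set 'cV[R]_d) :
  cone (S `&` @usphere R d) `<=` T -> leb_outer T = 0 -> unif_sphere S = 0.
Proof.
move=> ST T0; rewrite /unif_sphere.
have -> : leb_outer (cone (S `&` @usphere R d)) = 0.
  by apply/eqP; rewrite eq_le leb_outer_ge0 -T0 leb_outer_le.
by rewrite /= mul0r.
Qed.

Lemma cube1_scale_usphere (R : realType) d t (x : 'cV[R]_d) :
  0 < t <= 1 -> usphere x -> cube 1 (t *: x).
Proof.
move=> /andP[t0 t1] x1 i.
by rewrite mxE normrM -[1]mulr1 ler_pM ?usphere_coord_le1 // ger0_norm // ltW.
Qed.

Section Forms.
Variables (R : realType) (m l d : nat) (A : 'M[R]_(m, d)) (B : 'M[R]_(l, d)).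
Variable v : 'cV[R]_d.

Definition alpha_form x :=
  dotv (A *m v) (A *m x) * sqnorm (B *m v) - sqnorm (A *m v) * dotv (B *m v) (B *m x).

Definition gamma_form x :=
  sqnorm (A *m x) * dotv (B *m v) (B *m x) - dotv (A *m v) (A *m x) * sqnorm (B *m x).

Lemma alpha_formZ t x : alpha_form (t *: x) = t * alpha_form x.
Proof. by rewrite /alpha_form -!scalemxAr !dotvZr; ring. Qed.

Lemma gamma_formZ t x : gamma_form (t *: x) = t ^+ 3 * gamma_form x.
Proof. by rewrite /gamma_form -!scalemxAr !sqnormZ !dotvZr; ring. Qed.

Lemma poly_along_gamma_alpha u :
  poly_along (fun x => gamma_form x * alpha_form x) u 4 (gamma_form u * alpha_form u).
Proof.
have gamma_u : poly_along gamma_form u 3 (gamma_form u).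
  exact: poly_alongB (poly_alongM (poly_along_sqnorm A u) (poly_along_dotv (B *m v) B u))
                     (poly_alongM (poly_along_dotv (A *m v) A u) (poly_along_sqnorm B u)).
have alpha_u : poly_along alpha_form u 1 (alpha_form u).
  exact: poly_alongB (poly_alongM (poly_along_dotv (A *m v) A u) (poly_along_cst u _))
                     (poly_alongM (poly_along_cst u _) (poly_along_dotv (B *m v) B u)).
exact: poly_alongM gamma_u alpha_u.
Qed.

Lemma cube_lipschitz_gamma_alpha : cube_lipschitz (fun x => gamma_form x * alpha_form x).
Proof.
have LA := cube_lipschitz_mulmx A; have LB := cube_lipschitz_mulmx B.
have cst k (w : 'cV[R]_k) (i : 'I_k) := cube_lipschitz_cst d (w i ord0).
have sqA := cube_lipschitz_dotv LA LA; have sqB := cube_lipschitz_dotv LB LB.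
have dA := cube_lipschitz_dotv (cst _ (A *m v)) LA.
have dB := cube_lipschitz_dotv (cst _ (B *m v)) LB.
rewrite /gamma_form /alpha_form; apply: cube_lipschitzM; apply: cube_lipschitzB;
  apply: cube_lipschitzM => //; exact: cube_lipschitz_cst.
Qed.

Lemma gamma_alpha_neq0 : (forall x : 'cV[R]_d, B *m x = 0 -> x = 0) -> v != 0 ->
  ~ gen_eigvec A B v -> exists x, gamma_form x * alpha_form x != 0.
Proof.
move=> Bker v0 not_eigvec.
pose p := A^T *m A *m v; pose q := B^T *m B *m v.
have B_neq0 x : x != 0 -> B *m x != 0 := contra_neq (Bker x).
have q0 : sqnorm q != 0.
  have : 0 < dotv q v by rewrite -dotv_mulmx sqnorm_gt0 B_neq0.
  by rewrite sqnorm_eq0; apply: contraTneq => ->; rewrite dotvC dotv0r ltxx.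
pose mu := dotv p q / sqnorm q; pose x0 := p - mu *: q.
have qx0 : dotv q x0 = 0 by rewrite dotvBr dotvZr (dotvC q p) divfK // subrr.
have px0 : dotv p x0 = sqnorm x0.
  by rewrite -[in LHS](subrK (mu *: q) p) dotvDl dotvZl qx0 mulr0 addr0.
have x0_neq0 : x0 != 0.
  apply/eqP => x00; apply: not_eigvec; split => //; exists mu.
  by apply/eqP; rewrite -subr_eq0; apply/eqP.
exists x0; rewrite /gamma_form /alpha_form !dotv_mulmx -/p -/q qx0 px0.
by rewrite !mulr0 sub0r subr0 mulNr oppr_eq0 !mulf_neq0 ?sqnorm_eq0 ?B_neq0.
Qed.

End Forms.

Theorem mainTheorem12 (R : realType) (m l d : nat)
  (A : 'M[R]_(m, d)) (B : 'M[R]_(l, d)) (v : 'cV[R]_d) :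
  (forall x : 'cV[R]_d, B *m x = 0 -> x = 0) ->
  @usphere R d v ->
  ~ gen_eigvec A B v ->
  unif_sphere_as (fun x : 'cV[R]_d =>
    let a := sqnorm (A *m v) in
    let b := dotv (A *m v) (A *m x) in
    let c := sqnorm (A *m x) in
    let dv := sqnorm (B *m v) in
    let e := dotv (B *m v) (B *m x) in
    let fx := sqnorm (B *m x) in
    let alpha := b * dv - a * e in
    let gamma := c * e - b * fx in
    gamma <> 0 /\ alpha <> 0).
Proof.
move=> Bker vS not_eigvec.
have [u Pu] := gamma_alpha_neq0 Bker (usphere_neq0 vS) not_eigvec.
have u0 : u != 0.
  by apply: contraNneq Pu => ->; rewrite -(scale0r 0) alpha_formZ mul0r mulr0.
have := leb_outer_cube_zeros_eq0 (cube_lipschitz_gamma_alpha A B v) u0 Pu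
  (poly_along_gamma_alpha A B v u).
apply: unif_sphere_eq0 => _ [t [x [t01 [[[_ exc] xS] ->]]]].
split; first exact: cube1_scale_usphere.
have {}exc : ~ (gamma_form A B v x <> 0 /\ alpha_form A B v x <> 0) := exc.
rewrite /= gamma_formZ alpha_formZ.
have [->|g0] := eqVneq (gamma_form A B v x) 0; first by rewrite !mulr0 mul0r.
have [->|a0] := eqVneq (alpha_form A B v x) 0; first by rewrite !mulr0.
by case: exc; split; apply/eqP.
Qed.
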